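(* Let $R=\mathbb{Z}_4+u\mathbb{Z}_4$ with $u^2=0$, let $n$ be odd, and let $\overline{\mu}:R^n\to R^n$, $\overline{\mu}(c_0,\dots,c_{n-1})=(c_0,(1+2u)c_1,\dots,(1+2u)^{n-1}c_{n-1})$. Then $C$ is a cyclic code over $R$ of length $n$ with minimum Lee distance $d_L$ if and only if $\overline{\mu}(C)$ is a $(1+2u)$-constacyclic code over $R$ of length $n$ with the same minimum Lee distance $d_L$.
   Context: Codes are linear ($R$-submodules of $R^n$). Cyclic: invariant under $(c_0,\dots,c_{n-1})\mapsto(c_{n-1},c_0,\dots,c_{n-2})$; $(1+2u)$-constacyclic: invariant under $(c_0,\dots,c_{n-1})\mapsto((1+2u)c_{n-1},c_0,\dots,c_{n-2})$. Lee weight on $\mathbb{Z}_4$: $w_L(0)=0,w_L(1)=w_L(3)=1,w_L(2)=2$; on $R$: $w_L(a+ub)=w_L(b)+w_L(2a+b)$; on $R^n$: sum of component weights; Lee distance $d_L(x,y)=w_L(x-y)$, and the minimum Lee distance of a code is the smallest Lee distance between distinct codewords. *)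

From mathcomp Require Import all_boot all_order all_algebra.
Set Implicit Arguments. Unset Strict Implicit. Unset Printing Implicit Defensive.
Import GRing.Theory.
Local Open Scope ring_scope.

(* The ring R = Z_4 + u Z_4, u^2 = 0: the element a + u b is the pair (a, b). *)
Definition R := ('Z_4 * 'Z_4)%type.

Definition Rzero : R := (0, 0).
Definition Radd (x y : R) : R := (x.1 + y.1, x.2 + y.2).
Definition Ropp (x : R) : R := (- x.1, - x.2).
Definition Rsub (x y : R) : R := Radd x (Ropp y).
(* (a + u b)(c + u d) = ac + u (ad + bc) since u^2 = 0 *)
Definition Rmul (x y : R) : R := (x.1 * y.1, x.1 * y.2 + x.2 * y.1).
Definition Rone : R := (1, 0).
Definition lam : R := (1, 2%:R).
Fixpoint Rpow (x : R) (k : nat) : R :=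
  match k with O => Rone | S k' => Rmul x (Rpow x k') end.

Definition word n := {ffun 'I_n -> R}.

Definition is_linear_code n (C : {set word n}) : Prop :=
  [/\ [ffun _ => Rzero] \in C,
      (forall x y, x \in C -> y \in C -> [ffun i => Radd (x i) (y i)] \in C)
    & (forall (r : R) x, x \in C -> [ffun i => Rmul r (x i)] \in C)].

Definition cshift n (c : word n) : word n := [ffun i => c (ord_pred i)].
Definition conshift n (a : R) (c : word n) : word n :=
  [ffun i : 'I_n => if val i == 0%N then Rmul a (c (ord_pred i)) else c (ord_pred i)].

Definition is_cyclic_code n (C : {set word n}) : Prop :=
  is_linear_code C /\ forall c, c \in C -> cshift c \in C.
Definition is_constacyclic_code n (a : R) (C : {set word n}) : Prop :=
  is_linear_code C /\ forall c, c \in C -> conshift a c \in C.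

Definition leeZ4 (x : 'Z_4) : nat :=
  match val x with 0 => 0 | 2 => 2 | _ => 1 end%N.
Definition leeR (x : R) : nat := (leeZ4 x.2 + leeZ4 (2%:R * x.1 + x.2)%R)%N.
Definition lee_weight n (c : word n) : nat := (\sum_(i < n) leeR (c i))%N.
Definition lee_dist n (x y : word n) : nat := lee_weight [ffun i => Rsub (x i) (y i)].

Definition min_lee_dist n (C : {set word n}) (d : nat) : Prop :=
  (exists x y, [/\ x \in C, y \in C, x != y & lee_dist x y = d]) /\
  (forall x y, x \in C -> y \in C -> x != y -> (d <= lee_dist x y)%N).

Definition mubar n (c : word n) : word n := [ffun i : 'I_n => Rmul (Rpow lam i) (c i)].

(* Since (1 + 2u)^2 = 1, the power (1 + 2u)^i only depends on the parity of i,
   so mubar is an R-linear involution of R^n; and multiplication by the unit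
   1 + 2u preserves Lee weight, so mubar is a Lee isometry.  For odd n, the
   coordinates 0 and n - 1 both carry the weight 1, hence mubar conjugates the
   cyclic shift into (1 + 2u) times the (1 + 2u)-constacyclic shift.  A linear
   code is closed under scaling by 1 + 2u, so closure under one shift is
   equivalent to closure of the image under the other. *)
From mathcomp Require Import all_boot all_order all_algebra.
From mathcomp Require Import ring.
Set Implicit Arguments. Unset Strict Implicit. Unset Printing Implicit Defensive.
Import GRing.Theory.
Local Open Scope ring_scope.

Lemma Rmul1r (x : R) : Rmul Rone x = x.
Proof. by case: x => a b; rewrite /Rmul /=; congr pair; ring. Qed.

Lemma Rmulr0 (x : R) : Rmul x Rzero = Rzero.
Proof. by case: x => a b; rewrite /Rmul /Rzero /=; congr pair; ring. Qed.

Lemma RmulA (x y z : R) : Rmul x (Rmul y z) = Rmul (Rmul x y) z.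
Proof. by case: x y z => [a b] [c d] [e f]; rewrite /Rmul /=; congr pair; ring. Qed.

Lemma RmulC (x y : R) : Rmul x y = Rmul y x.
Proof. by case: x y => [a b] [c d]; rewrite /Rmul /=; congr pair; ring. Qed.

Lemma RmulDr (x y z : R) : Rmul x (Radd y z) = Radd (Rmul x y) (Rmul x z).
Proof.
by case: x y z => [a b] [c d] [e f]; rewrite /Rmul /Radd /=; congr pair; ring.
Qed.

Lemma RmulBr (x y z : R) : Rmul x (Rsub y z) = Rsub (Rmul x y) (Rmul x z).
Proof.
case: x y z => [a b] [c d] [e f].
by rewrite /Rmul /Rsub /Radd /Ropp /=; congr pair; ring.
Qed.

Lemma lam_sqr : Rmul lam lam = Rone. Proof. by apply/eqP. Qed.

Lemma lamK (x : R) : Rmul lam (Rmul lam x) = x.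
Proof. by rewrite RmulA lam_sqr Rmul1r. Qed.

Lemma leeR_lam (x : R) : leeR (Rmul lam x) = leeR x.
Proof. by case: x => -[[|[|[|[|?]]]] ?] -[[|[|[|[|?]]]] ?]. Qed.

Lemma Rpow_lam (k : nat) : Rpow lam k = if odd k then lam else Rone.
Proof. by elim: k => //= k ->; case: (odd k); apply/eqP. Qed.

Lemma Rpow_lamK (k : nat) (x : R) : Rmul (Rpow lam k) (Rmul (Rpow lam k) x) = x.
Proof. by rewrite Rpow_lam; case: (odd k); rewrite ?lamK ?Rmul1r. Qed.

Lemma leeR_Rpow_lam (k : nat) (x : R) : leeR (Rmul (Rpow lam k) x) = leeR x.
Proof. by rewrite Rpow_lam; case: (odd k); rewrite ?leeR_lam ?Rmul1r. Qed.

Lemma val_ord_pred (n : nat) (i : 'I_n) :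
  val (ord_pred i) = if val i == 0%N then n.-1 else (val i).-1.
Proof.
case: i => [[|k] lt_k_n] /=; last by rewrite modnDr modn_small // ltnW.
by rewrite add0n modn_small // prednK // ltnW.
Qed.

Section MinLeeDistImage.

Variables (n : nat) (f : word n -> word n).
Hypothesis f_inj : injective f.
Hypothesis f_isometry : forall x y, lee_dist (f x) (f y) = lee_dist x y.

Lemma min_lee_dist_imset (C : {set word n}) (d : nat) :
  min_lee_dist (f @: C) d <-> min_lee_dist C d.
Proof.
split=> -[[x [y [Cx Cy neq_xy dist_xy]]] d_min].
- case/imsetP: Cx neq_xy dist_xy => x' Cx' ->.
  case/imsetP: Cy => y' Cy' -> neq_xy dist_xy; split.
    by exists x', y'; rewrite -(inj_eq f_inj) -f_isometry.
  by move=> u v Cu Cv neq_uv; rewrite -f_isometry d_min ?imset_f ?(inj_eq f_inj).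
- split; first by exists (f x), (f y); rewrite !imset_f ?(inj_eq f_inj) ?f_isometry.
  move=> _ _ /imsetP[u Cu ->] /imsetP[v Cv ->].
  by rewrite (inj_eq f_inj) f_isometry; apply: d_min.
Qed.

End MinLeeDistImage.

Section Mubar.

Variable n : nat.
Implicit Types (c x y : word n) (C : {set word n}).

Definition wscale (r : R) c : word n := [ffun i => Rmul r (c i)].

Lemma linear_code_wscale C r c : is_linear_code C -> c \in C -> wscale r c \in C.
Proof. by case=> _ _; apply. Qed.

Lemma mubarK : involutive (@mubar n).
Proof. by move=> c; apply/ffunP => i; rewrite !ffunE Rpow_lamK. Qed.

Lemma mubar_inj : injective (@mubar n).
Proof. exact: inv_inj mubarK. Qed.

Lemma mem_mubar_imset C x : (x \in @mubar n @: C) = (mubar x \in C).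
Proof. by rewrite (can_imset_pre _ mubarK) inE. Qed.

Lemma mubar_imsetK C : @mubar n @: (@mubar n @: C) = C.
Proof. by apply/setP => x; rewrite !mem_mubar_imset mubarK. Qed.

Lemma lee_dist_mubar x y : lee_dist (mubar x) (mubar y) = lee_dist x y.
Proof. by apply: eq_bigr => i _; rewrite !ffunE -RmulBr leeR_Rpow_lam. Qed.

Lemma linear_code_mubar_imset C : is_linear_code C -> is_linear_code (@mubar n @: C).
Proof.
case=> C0 CD CZ; split; rewrite ?mem_mubar_imset.
- suff -> : mubar [ffun=> Rzero] = [ffun=> Rzero] :> word n by [].
  by apply/ffunP => i; rewrite !ffunE Rmulr0.
- move=> x y; rewrite !mem_mubar_imset => Cx Cy.
  suff -> : mubar [ffun i => Radd (x i) (y i)]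
          = [ffun i => Radd (mubar x i) (mubar y i)] by apply: CD.
  by apply/ffunP => i; rewrite !ffunE RmulDr.
- move=> r x; rewrite !mem_mubar_imset => Cx.
  suff -> : mubar (wscale r x) = wscale r (mubar x) by apply: CZ.
  by apply/ffunP => i; rewrite !ffunE !RmulA (RmulC r).
Qed.

Lemma linear_code_mubar_imsetE C : is_linear_code (@mubar n @: C) <-> is_linear_code C.
Proof.
split; last exact: linear_code_mubar_imset.
by rewrite -{2}(mubar_imsetK C); apply: linear_code_mubar_imset.
Qed.

Hypothesis n_odd : odd n.

Lemma conshift_lam_mubar c : conshift lam (mubar c) = wscale lam (mubar (cshift c)).
Proof.
apply/ffunP => i; rewrite !ffunE val_ord_pred.
case: i => [[|k] lt_k_n] /=; last by rewrite RmulA RmulA lam_sqr Rmul1r.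
have even_pred_n : odd n.-1 = false by move: n_odd; case: (n) => //= m /negPf.
by rewrite Rpow_lam even_pred_n.
Qed.

Lemma mubar_cshift c : mubar (cshift c) = wscale lam (conshift lam (mubar c)).
Proof. by apply/ffunP => i; rewrite conshift_lam_mubar !ffunE lamK. Qed.

Lemma cyclic_code_mubar_imsetE C :
  is_cyclic_code C <-> is_constacyclic_code lam (@mubar n @: C).
Proof.
rewrite /is_cyclic_code /is_constacyclic_code; split=> -[linC shiftC].
- have linC' := linear_code_mubar_imset linC.
  split=> // c; rewrite mem_mubar_imset => Cc.
  rewrite -(mubarK c) conshift_lam_mubar.
  by apply: linear_code_wscale linC' _; rewrite mem_mubar_imset mubarK; apply: shiftC.
- split; first exact/linear_code_mubar_imsetE.
  move=> c Cc; rewrite -[cshift c]mubarK -mem_mubar_imset mubar_cshift.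
  by apply: linear_code_wscale linC (shiftC _ _); rewrite mem_mubar_imset mubarK.
Qed.

End Mubar.

Theorem corollary4p8 (n : nat) (Hodd : odd n) (C : {set word n}) (d : nat) :
  (is_cyclic_code C /\ min_lee_dist C d) <->
  (is_constacyclic_code lam (@mubar n @: C) /\ min_lee_dist (@mubar n @: C) d).
Proof.
have cyclicE := cyclic_code_mubar_imsetE Hodd C.
have distE := min_lee_dist_imset (@mubar_inj n) (@lee_dist_mubar n) C d.
by split=> -[? ?]; split; [apply/cyclicE | apply/distE | apply/cyclicE | apply/distE].
Qed.
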